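(* Let $C$ be a smooth convex plane curve with no two parallel tangent lines, with its associated domain $D$ and area distance $f:D\to\mathbb{R}$ (defined in the context), and let $C(r)$ be a regular parameterization of $C$. For $p\in D$ denote by $C(u(p))$ and $C(v(p))$ the two extremities of the minimal chord $l(p)$, and regard $u$ and $v$ as (differentiable) functions of $p$. Then $$\nabla u=-\frac{2\,R\,C'(v)}{[C'(u),C'(v)]},\qquad \nabla v=\frac{2\,R\,C'(u)}{[C'(u),C'(v)]}.$$
   Context: $C$ may have $2$, $1$ or $0$ endpoints. $D$ is the plane region bounded by $C$ and by the image(s) of $C$ under the homothety of ratio $1/2$ centred at each endpoint of $C$. A chord is a line segment joining two points of $C$. For $p\in D$, each chord $l$ through $p$ bounds, together with $C$, a region $D_l$; $l(p)$ denotes the chord through $p$ for which the area of $D_{l}$ is minimal, and the area distance is $f(p)=\tfrac12\,\mathrm{area}(D_{l(p)})$. It is known that every $p\in D$ is the midpoint of $l(p)$, i.e. $2p=C(u(p))+C(v(p))$. Notation: for plane vectors $X,Y$, $[X,Y]$ is the determinant of the $2\times2$ matrix with columns $X,Y$; $R$ is the counterclockwise rotation by ninety degrees, so $[X,Y]=-X^tRY$. *)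

From Stdlib Require Import Reals.
From Coquelicot Require Import Coquelicot.
Open Scope R_scope.

Definition pt := (R * R)%type.

(* [X,Y] = det of the 2x2 matrix with columns X, Y. *)
Definition cross (X Y : pt) : R := fst X * snd Y - snd X * fst Y.

(* R = counterclockwise rotation by ninety degrees. *)
Definition rot (X : pt) : pt := (- snd X, fst X).

Definition scal2 (a : R) (X : pt) : pt := (a * fst X, a * snd X).
Definition add2 (X Y : pt) : pt := (fst X + fst Y, snd X + snd Y).
Definition sub2 (X Y : pt) : pt := (fst X - fst Y, snd X - snd Y).

Definition is_interval (I : R -> Prop) : Prop :=
  forall a b c, I a -> I b -> a <= c <= b -> I c.

Definition open2 (D : R -> R -> Prop) : Prop :=
  forall x y, D x y -> exists eps : R, 0 < eps /\
    forall x' y', Rabs (x' - x) < eps -> Rabs (y' - y) < eps -> D x' y'.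

Definition C1_curve (C C' : R -> pt) : Prop :=
  (forall r, derivable_pt_lim (fun t => fst (C t)) r (fst (C' r)) /\
             derivable_pt_lim (fun t => snd (C t)) r (snd (C' r))) /\
  (forall r, continuity_pt (fun t => fst (C' t)) r /\
             continuity_pt (fun t => snd (C' t)) r).

Definition regular_on (I : R -> Prop) (C' : R -> pt) : Prop :=
  forall r, I r -> C' r <> (0, 0).

Definition injective_on (I : R -> Prop) (C : R -> pt) : Prop :=
  forall r s, I r -> I s -> C r = C s -> r = s.

Definition convex_curve (I : R -> Prop) (C C' : R -> pt) : Prop :=
  forall r, I r ->
    (forall s, I s -> 0 <= cross (C' r) (sub2 (C s) (C r))) \/
    (forall s, I s -> cross (C' r) (sub2 (C s) (C r)) <= 0).

Definition no_parallel_tangents (I : R -> Prop) (C' : R -> pt) : Prop :=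
  forall r s, I r -> I s -> r <> s -> cross (C' r) (C' s) <> 0.

Definition has_gradient (f : R -> R -> R) (x y : R) (g : pt) : Prop :=
  differentiable_pt_lim f x y (fst g) (snd g).

(* Along the horizontal and vertical lines through p, the midpoint relation
   C(u) + C(v) = 2p is an identity between functions of one variable.
   Differentiating it gives C'(u) du + C'(v) dv = 2 dp, i.e. a 2x2 linear
   system for the partial derivatives of u and v whose determinant is
   [C'(u), C'(v)] <> 0 (no parallel tangents); Cramer's rule solves it. *)
From Stdlib Require Import Reals Lra.
From Coquelicot Require Import Coquelicot.
Open Scope R_scope.

Lemma differentiable_pt_lim_partial_x (f : R -> R -> R) (x y lx ly : R) :
  differentiable_pt_lim f x y lx ly -> derivable_pt_lim (fun t => f t y) x lx.
Proof.
  intros Hf.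
  pose proof (derivable_pt_lim_comp_2d f (fun t => t) (fun _ => y) x lx ly 1 0
                Hf (derivable_pt_lim_id x) (derivable_pt_lim_const y x)) as H.
  replace lx with (lx * 1 + ly * 0) by ring. exact H.
Qed.

Lemma differentiable_pt_lim_partial_y (f : R -> R -> R) (x y lx ly : R) :
  differentiable_pt_lim f x y lx ly -> derivable_pt_lim (fun t => f x t) y ly.
Proof.
  intros Hf.
  pose proof (derivable_pt_lim_comp_2d f (fun _ => x) (fun t => t) y lx ly 0 1
                Hf (derivable_pt_lim_const x y) (derivable_pt_lim_id y)) as H.
  replace ly with (lx * 0 + ly * 1) by ring. exact H.
Qed.

Lemma derivable_pt_lim_locally_affine (F : R -> R) (t0 a b eps d : R) :
  0 < eps -> (forall t, Rabs (t - t0) < eps -> F t = a * t + b) ->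
  derivable_pt_lim F t0 d -> d = a.
Proof.
  intros Heps HF HFd.
  apply is_derive_Reals in HFd.
  assert (Ha : is_derive F t0 a).
  { apply (is_derive_ext_loc (fun t => a * t + b)).
    - exists (mkposreal eps Heps). intros t Ht. symmetry. exact (HF t Ht).
    - auto_derive; [exact I | ring]. }
  rewrite <- (is_derive_unique _ _ _ HFd). exact (is_derive_unique _ _ _ Ha).
Qed.

Lemma cramer2 (a b : R) (P Q E : pt) :
  add2 (scal2 a P) (scal2 b Q) = E -> cross P Q <> 0 ->
  a = cross E Q / cross P Q /\ b = cross P E / cross P Q.
Proof.
  intros <- HPQ.
  destruct P as [p1 p2], Q as [q1 q2].
  unfold cross, add2, scal2 in *; simpl in *.
  split; field; exact HPQ.
Qed.

Section ChordEndpoints.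

Variables (C C' : R -> pt).
Hypothesis HC' : forall r,
  derivable_pt_lim (fun t => fst (C t)) r (fst (C' r)) /\
  derivable_pt_lim (fun t => snd (C t)) r (snd (C' r)).

Lemma chord_sum_derivative (g h : R -> R) (t0 dg dh eps : R) (A B : pt) :
  derivable_pt_lim g t0 dg -> derivable_pt_lim h t0 dh -> 0 < eps ->
  (forall t, Rabs (t - t0) < eps ->
     add2 (C (g t)) (C (h t)) = add2 A (scal2 t B)) ->
  add2 (scal2 dg (C' (g t0))) (scal2 dh (C' (h t0))) = B.
Proof.
  intros Hg Hh Heps Hsum.
  assert (Hcomp : forall P : pt -> R,
    (forall r, derivable_pt_lim (fun t => P (C t)) r (P (C' r))) ->
    (forall t, Rabs (t - t0) < eps ->
       P (C (g t)) + P (C (h t)) = P B * t + P A) ->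
    P (C' (g t0)) * dg + P (C' (h t0)) * dh = P B).
  { intros P HP HPsum.
    apply (derivable_pt_lim_locally_affine _ t0 _ (P A) eps _ Heps HPsum).
    apply (derivable_pt_lim_plus (fun t => P (C (g t))) (fun t => P (C (h t)))).
    - exact (derivable_pt_lim_comp g (fun t => P (C t)) t0 dg _ Hg (HP (g t0))).
    - exact (derivable_pt_lim_comp h (fun t => P (C t)) t0 dh _ Hh (HP (h t0))). }
  destruct B as [B1 B2]. unfold add2, scal2; simpl; f_equal;
    rewrite (Rmult_comm dg), (Rmult_comm dh).
  - apply (Hcomp fst); [intro r; apply HC' |].
    intros t Ht. pose proof (f_equal fst (Hsum t Ht)) as HsumP. simpl in *. lra.
  - apply (Hcomp snd); [intro r; apply HC' |].
    intros t Ht. pose proof (f_equal snd (Hsum t Ht)) as HsumP. simpl in *. lra.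
Qed.

Variables (D : R -> R -> Prop) (u v : R -> R -> R).
Hypothesis HD : open2 D.
Hypothesis Hmid : forall x y, D x y ->
  scal2 2 (x, y) = add2 (C (u x y)) (C (v x y)).

Lemma midpoint_relation_derivative (x y a1 a2 b1 b2 : R) :
  D x y ->
  differentiable_pt_lim u x y a1 a2 -> differentiable_pt_lim v x y b1 b2 ->
  add2 (scal2 a1 (C' (u x y))) (scal2 b1 (C' (v x y))) = (2, 0) /\
  add2 (scal2 a2 (C' (u x y))) (scal2 b2 (C' (v x y))) = (0, 2).
Proof.
  intros Hxy Hu Hv.
  destruct (HD x y Hxy) as [eps [Heps Hball]].
  assert (Hcentre : forall z, Rabs (z - z) < eps).
  { intro z. unfold Rminus. rewrite Rplus_opp_r, Rabs_R0. exact Heps. }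
  split.
  - apply (chord_sum_derivative (fun t => u t y) (fun t => v t y) x a1 b1 eps (0, 2 * y));
      [apply (differentiable_pt_lim_partial_x _ _ _ _ _ Hu)
      | apply (differentiable_pt_lim_partial_x _ _ _ _ _ Hv) | exact Heps |].
    intros t Ht. rewrite <- (Hmid t y (Hball t y Ht (Hcentre y))).
    unfold add2, scal2; simpl. f_equal; ring.
  - apply (chord_sum_derivative (fun t => u x t) (fun t => v x t) y a2 b2 eps (2 * x, 0));
      [apply (differentiable_pt_lim_partial_y _ _ _ _ _ Hu)
      | apply (differentiable_pt_lim_partial_y _ _ _ _ _ Hv) | exact Heps |].
    intros t Ht. rewrite <- (Hmid x t (Hball x t (Hcentre x) Ht)).
    unfold add2, scal2; simpl. f_equal; ring.
Qed.

End ChordEndpoints.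

Theorem mainTheorem1
  (I : R -> Prop) (C C' : R -> pt)
  (D : R -> R -> Prop) (u v : R -> R -> R)
  (HI : is_interval I)
  (HC : C1_curve C C')
  (Hreg : regular_on I C')
  (Hinj : injective_on I C)
  (Hconv : convex_curve I C C')
  (Hpar : no_parallel_tangents I C')
  (HD : open2 D)
  (Huv_in : forall x y, D x y -> I (u x y) /\ I (v x y))
  (Huv_ne : forall x y, D x y -> u x y <> v x y)
  (Hmid : forall x y, D x y ->
            scal2 2 (x, y) = add2 (C (u x y)) (C (v x y)))
  (Hdiff : forall x y, D x y ->
            (exists g, has_gradient u x y g) /\ (exists g, has_gradient v x y g)) :
  forall x y, D x y ->
    has_gradient u x y
      (scal2 (- 2 / cross (C' (u x y)) (C' (v x y))) (rot (C' (v x y)))) /\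
    has_gradient v x y
      (scal2 (2 / cross (C' (u x y)) (C' (v x y))) (rot (C' (u x y)))).
Proof.
  intros x y Hxy.
  destruct (Hdiff x y Hxy) as [[[a1 a2] Hu] [[b1 b2] Hv]].
  unfold has_gradient in Hu, Hv; simpl in Hu, Hv.
  destruct (midpoint_relation_derivative C C' (proj1 HC) D u v HD Hmid
              x y a1 a2 b1 b2 Hxy Hu Hv) as [Ex Ey].
  assert (Hc : cross (C' (u x y)) (C' (v x y)) <> 0).
  { destruct (Huv_in x y Hxy). apply Hpar; auto. }
  destruct (cramer2 _ _ _ _ _ Ex Hc) as [A1 B1].
  destruct (cramer2 _ _ _ _ _ Ey Hc) as [A2 B2].
  unfold has_gradient.
  destruct (C' (u x y)) as [p1 p2], (C' (v x y)) as [q1 q2].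
  unfold cross, scal2, rot in *; simpl in *.
  split.
  - replace (-2 / (p1 * q2 - p2 * q1) * - q2) with a1 by (rewrite A1; field; exact Hc).
    replace (-2 / (p1 * q2 - p2 * q1) * q1) with a2 by (rewrite A2; field; exact Hc).
    exact Hu.
  - replace (2 / (p1 * q2 - p2 * q1) * - p2) with b1 by (rewrite B1; field; exact Hc).
    replace (2 / (p1 * q2 - p2 * q1) * p1) with b2 by (rewrite B2; field; exact Hc).
    exact Hv.
Qed.
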